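(* Let $A\subset\mathbb{N}\setminus\{1\}$ and let $M\subset\ell^\infty$ be a $2$-dimensional linear subspace such that $|L_z|\in A$ for every $z\in M\setminus\{0\}$. Put $$n_1=\min\{|L_z|: z\in M\setminus\{0\}\},\qquad n_2=\max\{|L_z|: z\in M\}.$$ Then $n_1,n_2\in A$ and the open interval $(n_2-n_1,n_2)$ contains an element of $A$.
   Context: $\ell^\infty$ is the space of bounded real sequences with the sup norm. For $x\in\ell^\infty$, $L_x$ denotes the set of accumulation points (subsequential limits) of $x$, and $|L_x|$ its cardinality. *)

From Stdlib Require Import Reals List.
Import ListNotations.
Open Scope R_scope.

Definition bounded_seq (x : nat -> R) : Prop :=
  exists B : R, forall n, Rabs (x n) <= B.

(* l is an accumulation point (subsequential limit) of x: l is in L_x. *)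
Definition acc_pt (x : nat -> R) (l : R) : Prop :=
  exists phi : nat -> nat,
    (forall n, (phi n < phi (S n))%nat) /\ Un_cv (fun n => x (phi n)) l.

Definition has_card (P : R -> Prop) (k : nat) : Prop :=
  exists s : list R, NoDup s /\ length s = k /\ (forall y, P y <-> In y s).

Definition lincomb (a b : R) (u v : nat -> R) : nat -> R :=
  fun n => a * u n + b * v n.

(* u, v are linearly independent (so span{u,v} is 2-dimensional). *)
Definition lin_indep2 (u v : nat -> R) : Prop :=
  forall a b : R, (forall n, lincomb a b u v n = 0) -> a = 0 /\ b = 0.

From Stdlib Require Import Reals List RList.
From Stdlib Require Import Lra Lia Classical ClassicalEpsilon Rtopology.
Import ListNotations.
Open Scope R_scope.

(** If z = a u + b v, the accumulation points of z are the images of the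
    finite set J of joint accumulation points of (u, v) under the functional
    (x, y) |-> a x + b y; so |L_z| is the number of values this functional
    takes on J.  A generic functional is injective on J, so n2 = |J|, and a
    functional vanishing on a difference of two points of J shows n1 < n2.
    Now let f attain n1, let g be injective on J, and tilt g to
    h = g + T f with T the largest slope (g q - g p) / (f p - f q).  Then h
    identifies two points, so |L| < n2 for its combination; and in each level
    set of h, the points other than the f-largest one have pairwise distinct
    f-values (by maximality of T), none equal to max f.  Hence
    n2 <= |h(J)| + |f(J)| - 1, i.e. |h(J)| lies in (n2 - n1, n2). *)

Definition strictly_increasing (phi : nat -> nat) : Prop :=
  forall n, (phi n < phi (S n))%nat.

Lemma strictly_increasing_lt phi : strictly_increasing phi ->
  forall m n, (m < n)%nat -> (phi m < phi n)%nat.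
Proof.
  intros Hphi m n Hmn; induction Hmn as [|n _ IH]; [apply Hphi|].
  specialize (Hphi n); lia.
Qed.

Lemma strictly_increasing_ge phi : strictly_increasing phi ->
  forall n, (n <= phi n)%nat.
Proof. intros Hphi n; induction n; [lia|]. specialize (Hphi n); lia. Qed.

Lemma strictly_increasing_comp phi psi :
  strictly_increasing phi -> strictly_increasing psi ->
  strictly_increasing (fun n => phi (psi n)).
Proof. intros Hphi Hpsi n. apply (strictly_increasing_lt phi Hphi), Hpsi. Qed.

Lemma Un_cv_subseq w l psi : strictly_increasing psi -> Un_cv w l ->
  Un_cv (fun n => w (psi n)) l.
Proof.
  intros Hpsi Hw eps Heps. destruct (Hw eps Heps) as [N HN].
  exists N. intros n Hn. apply HN.
  pose proof (strictly_increasing_ge psi Hpsi n). lia.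
Qed.

Lemma Un_cv_const (c : R) : Un_cv (fun _ => c) c.
Proof.
  intros eps Heps. exists O. intros n _.
  unfold Rdist. rewrite Rminus_diag, Rabs_R0. exact Heps.
Qed.

Lemma Un_cv_lin a b x y lx ly : Un_cv x lx -> Un_cv y ly ->
  Un_cv (fun n => a * x n + b * y n) (a * lx + b * ly).
Proof. intros Hx Hy. apply CV_plus; apply CV_mult; auto; apply Un_cv_const. Qed.

Lemma bounded_seq_cv_subseq w : bounded_seq w ->
  exists phi l, strictly_increasing phi /\ Un_cv (fun n => w (phi n)) l.
Proof.
  intros [B HB].
  destruct (Bolzano_Weierstrass w (fun c => -B <= c <= B) (compact_P3 (-B) B))
    as [l Hl].
  { intros n. pose proof (Rle_abs (w n)). pose proof (Rle_abs (- w n)).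
    rewrite Rabs_Ropp in *. specialize (HB n). lra. }
  assert (Hclose : forall kN : nat * nat,
             exists p, (snd kN <= p)%nat /\ Rabs (w p - l) < / INR (S (fst kN))).
  { intros [k N].
    assert (Hpos : 0 < / INR (S k)) by (apply Rinv_0_lt_compat, lt_0_INR; lia).
    destruct (Hl (disc l (mkposreal _ Hpos)) N) as [p Hp]; [|exists p; exact Hp].
    exists (mkposreal _ Hpos). intros y Hy. exact Hy. }
  destruct (choice _ Hclose) as [sel Hsel].
  set (phi := fix phi (n : nat) : nat :=
          match n with O => sel (O, O) | S m => sel (S m, S (phi m)) end).
  assert (Hphi : forall n, Rabs (w (phi n) - l) < / INR (S n)).
  { intros [|n]; [exact (proj2 (Hsel (O, O))) | exact (proj2 (Hsel (S n, S (phi n))))]. }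
  exists phi, l. split.
  - intros n. exact (proj1 (Hsel (S n, S (phi n)))).
  - intros eps Heps. destruct (archimed_cor1 eps Heps) as [K [HK HK0]].
    exists K. intros n Hn. unfold Rdist.
    apply Rlt_le_trans with (/ INR (S n)); [apply Hphi|].
    apply Rle_trans with (/ INR K); [|lra].
    apply Rinv_le_contravar; [apply lt_0_INR; lia | apply le_INR; lia].
Qed.

Definition lin (a b : R) (p : R * R) : R := a * fst p + b * snd p.

Definition joint_acc_pt (u v : nat -> R) (p : R * R) : Prop :=
  exists phi, strictly_increasing phi /\
    Un_cv (fun n => u (phi n)) (fst p) /\ Un_cv (fun n => v (phi n)) (snd p).

Lemma bounded_joint_cv_subseq u v phi : bounded_seq u -> bounded_seq v ->
  exists psi p, strictly_increasing psi /\
    Un_cv (fun n => u (phi (psi n))) (fst p) /\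
    Un_cv (fun n => v (phi (psi n))) (snd p).
Proof.
  intros [Bu Hu] [Bv Hv].
  destruct (bounded_seq_cv_subseq (fun n => u (phi n))) as [psi [x [Hpsi Hx]]].
  { exists Bu; auto. }
  destruct (bounded_seq_cv_subseq (fun n => v (phi (psi n)))) as [chi [y [Hchi Hy]]].
  { exists Bv; auto. }
  exists (fun n => psi (chi n)), (x, y).
  split; [apply strictly_increasing_comp; auto|].
  split; [exact (Un_cv_subseq _ _ _ Hchi Hx) | exact Hy].
Qed.

Lemma joint_acc_pt_exists u v : bounded_seq u -> bounded_seq v ->
  exists p, joint_acc_pt u v p.
Proof.
  intros hu hv. destruct (bounded_joint_cv_subseq u v (fun n => n) hu hv) as [psi [p H]].
  exists p, psi. exact H.
Qed.

Lemma acc_pt_lincomb u v a b l : bounded_seq u -> bounded_seq v ->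
  acc_pt (lincomb a b u v) l <-> exists p, joint_acc_pt u v p /\ l = lin a b p.
Proof.
  intros hu hv. split.
  - intros [phi [Hphi Hl]].
    destruct (bounded_joint_cv_subseq u v phi hu hv) as [psi [p [Hpsi [Hx Hy]]]].
    exists p. split.
    + exists (fun n => phi (psi n)). split; [apply strictly_increasing_comp|]; auto.
    + apply (UL_sequence (fun n => lincomb a b u v (phi (psi n)))).
      * exact (Un_cv_subseq _ _ _ Hpsi Hl).
      * apply Un_cv_lin; auto.
  - intros [p [[phi [Hphi [Hx Hy]]] ->]].
    exists phi. split; [exact Hphi | apply Un_cv_lin; auto].
Qed.

Lemma lincomb_nonzero_iff u v a b : lin_indep2 u v ->
  (exists n, lincomb a b u v n <> 0) <-> ~ (a = 0 /\ b = 0).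
Proof.
  intros hind. split.
  - intros [n Hn] [-> ->]. apply Hn. unfold lincomb. ring.
  - intros Hab. apply NNPP. intros Hz. apply Hab, hind.
    intros n. apply NNPP. intros Hn. apply Hz. exists n; exact Hn.
Qed.

Definition decide (P : Prop) : bool :=
  if excluded_middle_informative P then true else false.

Lemma decide_true P : decide P = true <-> P.
Proof. unfold decide; destruct (excluded_middle_informative P); split; easy. Qed.

Lemma decide_false P : decide P = false <-> ~ P.
Proof. unfold decide; destruct (excluded_middle_informative P); split; easy. Qed.

Definition point_eq_dec (p q : R * R) : {p = q} + {p <> q}.
Proof. decide equality; apply Req_EM_T. Defined.

Lemma joint_acc_pts_listing u v ku kv : bounded_seq u -> bounded_seq v ->
  has_card (acc_pt (lincomb 1 0 u v)) ku -> has_card (acc_pt (lincomb 0 1 u v)) kv ->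
  exists P, NoDup P /\ forall p, In p P <-> joint_acc_pt u v p.
Proof.
  intros hu hv [su [_ [_ Hsu]]] [sv [_ [_ Hsv]]].
  exists (nodup point_eq_dec
            (filter (fun p => decide (joint_acc_pt u v p)) (list_prod su sv))).
  split; [apply NoDup_nodup|]. intros [x y].
  rewrite nodup_In, filter_In, in_prod_iff, decide_true.
  split; [tauto|]. intros Hj. repeat split; auto.
  - apply Hsu, acc_pt_lincomb; auto. exists (x, y). split; auto. unfold lin; simpl; ring.
  - apply Hsv, acc_pt_lincomb; auto. exists (x, y). split; auto. unfold lin; simpl; ring.
Qed.

Definition nvals {X} (F : X -> R) (l : list X) : nat :=
  length (nodup Req_EM_T (map F l)).

Lemma nvals_ext {X} (F G : X -> R) l : (forall x, F x = G x) -> nvals F l = nvals G l.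
Proof. intros HFG. unfold nvals. rewrite (map_ext F G HFG l). reflexivity. Qed.

Lemma nvals_le_length {X} (F : X -> R) l : (nvals F l <= length l)%nat.
Proof.
  unfold nvals. rewrite <- (length_map F l).
  apply NoDup_incl_length; [apply NoDup_nodup|]. intros y; apply nodup_In.
Qed.

Lemma length_le_nvals {X} (F : X -> R) l s : NoDup s -> incl s l ->
  ForallPairs (fun x y => F x = F y -> x = y) s -> (length s <= nvals F l)%nat.
Proof.
  intros Hs Hsl Hinj. unfold nvals. rewrite <- (length_map F s).
  apply NoDup_incl_length; [apply NoDup_map_NoDup_ForallPairs; auto|].
  intros y Hy. apply nodup_In. apply in_map_iff in Hy as [x [<- Hx]].
  apply in_map, Hsl, Hx.
Qed.

Lemma nvals_injective {X} (F : X -> R) l : NoDup l ->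
  ForallPairs (fun x y => F x = F y -> x = y) l -> nvals F l = length l.
Proof.
  intros Hl Hinj. apply Nat.le_antisymm; [apply nvals_le_length|].
  apply length_le_nvals; auto. apply incl_refl.
Qed.

Lemma nvals_pos {X} (F : X -> R) l x : In x l -> (0 < nvals F l)%nat.
Proof.
  intros Hx. unfold nvals.
  assert (H : In (F x) (nodup Req_EM_T (map F l))) by apply nodup_In, in_map, Hx.
  destruct (nodup Req_EM_T (map F l)); [destruct H | simpl; lia].
Qed.

Lemma nvals_lt_length {X} (F : X -> R) l p q : In p l -> In q l -> p <> q ->
  F p = F q -> (nvals F l < length l)%nat.
Proof.
  intros Hp Hq Hpq HF.
  set (dec := fun x y : X => excluded_middle_informative (x = y)).
  apply Nat.le_lt_trans with (length (map F (remove dec q l))).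
  - apply NoDup_incl_length; [apply NoDup_nodup|].
    intros y Hy. apply nodup_In, in_map_iff in Hy as [r [<- Hr]].
    destruct (dec r q) as [->|Hrq]; [rewrite <- HF|]; apply in_map, in_in_remove; auto.
  - rewrite length_map. apply remove_length_lt; auto.
Qed.

Lemma nvals_two_values {X} (F : X -> R) l : (2 <= nvals F l)%nat ->
  exists p q, In p l /\ In q l /\ F p <> F q.
Proof.
  unfold nvals. pose proof (NoDup_nodup Req_EM_T (map F l)) as Hnd.
  assert (Hin : forall y, In y (nodup Req_EM_T (map F l)) -> exists p, F p = y /\ In p l)
    by (intros y Hy; apply nodup_In, in_map_iff in Hy; exact Hy).
  destruct (nodup Req_EM_T (map F l)) as [|x [|y r]]; simpl; intros H; try lia.
  destruct (Hin x) as [p [<- Hp]]; [now left|].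
  destruct (Hin y) as [q [<- Hq]]; [now right; left|].
  exists p, q. repeat split; auto.
  intros E. inversion Hnd. rewrite E in *. simpl in *. tauto.
Qed.

Lemma has_card_unique P k1 k2 : has_card P k1 -> has_card P k2 -> k1 = k2.
Proof.
  intros [s1 [N1 [<- H1]]] [s2 [N2 [<- H2]]].
  apply Nat.le_antisymm; apply NoDup_incl_length; auto; intros y Hy.
  - apply H2, H1, Hy.
  - apply H1, H2, Hy.
Qed.

Lemma has_card_acc_pt_lincomb u v P a b : bounded_seq u -> bounded_seq v ->
  (forall p, In p P <-> joint_acc_pt u v p) ->
  has_card (acc_pt (lincomb a b u v)) (nvals (lin a b) P).
Proof.
  intros hu hv HP. exists (nodup Req_EM_T (map (lin a b) P)).
  split; [apply NoDup_nodup|]. split; [reflexivity|].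
  intros l. rewrite acc_pt_lincomb, nodup_In, in_map_iff by assumption.
  split; intros [p [H1 H2]]; exists p; split; [| apply HP | apply HP |]; auto.
Qed.

Lemma exists_argmax {X} (F : X -> R) l : l <> [] ->
  exists x, In x l /\ forall y, In y l -> F y <= F x.
Proof.
  intros Hl. destruct (proj1 (in_map_iff F l (MaxRlist (map F l)))) as [x [Hx Hxl]].
  { apply MaxRlist_P2. destruct l as [|y l]; [contradiction|]. exists (F y); now left. }
  exists x. split; auto. intros y Hy. rewrite Hx. apply MaxRlist_P1, in_map, Hy.
Qed.

Lemma exists_least_nat (Q : nat -> Prop) : (exists k, Q k) ->
  exists k, Q k /\ forall j, Q j -> (k <= j)%nat.
Proof.
  intros HQ.
  destruct (Wf_nat.dec_inh_nat_subset_has_unique_least_element Q) as [k [Hk _]].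
  - intros n. apply classic.
  - exact HQ.
  - exists k. exact Hk.
Qed.

Section Tilt.

Variables (X : Type) (l : list X) (f g : X -> R).
Hypothesis l_nodup : NoDup l.
Hypothesis g_inj : ForallPairs (fun x y => g x = g y -> x = y) l.
Hypothesis f_two_values : (2 <= nvals f l)%nat.

Let slope (pq : X * X) : R := (g (snd pq) - g (fst pq)) / (f (fst pq) - f (snd pq)).
Let separated_pairs : list (X * X) :=
  filter (fun pq => decide (f (fst pq) <> f (snd pq))) (list_prod l l).
Let T : R := MaxRlist (map slope separated_pairs).
Let h (x : X) : R := g x + T * f x.
Let dominated (q : X) : Prop := exists p, In p l /\ h p = h q /\ f q < f p.

Lemma separated_pairs_In p q : In p l -> In q l -> f p <> f q ->
  In (p, q) separated_pairs.
Proof. intros Hp Hq Hpq. apply filter_In. rewrite in_prod_iff, decide_true. auto. Qed.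

Lemma tilt_collision : exists p q, In p l /\ In q l /\ p <> q /\ h p = h q.
Proof.
  destruct (nvals_two_values f l f_two_values) as [p1 [q1 [Hp1 [Hq1 Hf1]]]].
  destruct (proj1 (in_map_iff slope separated_pairs T)) as [[p q] [HT Hpq]].
  { apply MaxRlist_P2. exists (slope (p1, q1)). apply in_map, separated_pairs_In; auto. }
  unfold separated_pairs in Hpq. rewrite filter_In, in_prod_iff, decide_true in Hpq.
  destruct Hpq as [[Hp Hq] Hf].
  exists p, q. repeat split; auto; [intros ->; auto|].
  unfold h. rewrite <- HT. unfold slope; simpl. field. intros E; apply Hf; simpl; lra.
Qed.

(* The maximality of T is what keeps dominated points of a common f-value apart. *)
Lemma dominated_g_le q q' : dominated q -> In q' l -> f q' = f q -> g q' <= g q.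
Proof.
  intros [p [Hp [Hh Hf]]] Hq' Hfq.
  assert (Hs : slope (q', p) <= T).
  { apply MaxRlist_P1, in_map, separated_pairs_In; auto. lra. }
  unfold slope in Hs; simpl in Hs.
  assert (E : g p - g q' = (g p - g q') / (f q' - f p) * (f q' - f p)) by (field; lra).
  unfold h in Hh. nra.
Qed.

Lemma length_undominated_le :
  (length (filter (fun q => negb (decide (dominated q))) l) <= nvals h l)%nat.
Proof.
  apply length_le_nvals;
    [apply NoDup_filter, l_nodup | intros x Hx; apply filter_In in Hx; tauto |].
  intros x y Hx Hy Hxy.
  apply filter_In in Hx as [Hx Dx]. apply filter_In in Hy as [Hy Dy].
  rewrite Bool.negb_true_iff, decide_false in Dx, Dy.
  assert (Hf : f x = f y).
  { destruct (Rtotal_order (f x) (f y)) as [Hlt|[Heq|Hlt]]; auto; exfalso.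
    - apply Dx. exists y. auto.
    - apply Dy. exists x. auto. }
  apply g_inj; auto. unfold h in Hxy. rewrite Hf in Hxy. lra.
Qed.

Lemma length_dominated_lt :
  (S (length (filter (fun q => decide (dominated q)) l)) <= nvals f l)%nat.
Proof.
  destruct (exists_argmax f l) as [pm [Hpm Hmax]].
  { intros Hl. unfold nvals in f_two_values.
    rewrite Hl in f_two_values. simpl in *. lia. }
  assert (Hdom : forall q, In q (filter (fun q => decide (dominated q)) l) -> f q < f pm).
  { intros q Hq. rewrite filter_In, decide_true in Hq.
    destruct Hq as [_ [p [Hp [_ Hf]]]]. specialize (Hmax p Hp). lra. }
  apply (length_le_nvals f l (pm :: filter (fun q => decide (dominated q)) l)).
  - constructor; [intros H; specialize (Hdom pm H); lra | apply NoDup_filter, l_nodup].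
  - intros x [<-|Hx]; [exact Hpm | apply filter_In in Hx; tauto].
  - intros x y [<-|Hx] [<-|Hy] Hxy; auto.
    + specialize (Hdom y Hy). lra.
    + specialize (Hdom x Hx). lra.
    + rewrite filter_In, decide_true in Hx, Hy.
      destruct Hx as [Hxl Dx], Hy as [Hyl Dy].
      apply g_inj; auto.
      pose proof (dominated_g_le x y Dx Hyl (eq_sym Hxy)).
      pose proof (dominated_g_le y x Dy Hxl Hxy). lra.
Qed.

Lemma nvals_tilt : exists c : R,
  (nvals (fun x => (g x + c * f x)%R) l < length l
     < nvals (fun x => (g x + c * f x)%R) l + nvals f l)%nat.
Proof.
  exists T. split.
  - destruct tilt_collision as [p [q [Hp [Hq [Hpq Hh]]]]].
    exact (nvals_lt_length h l p q Hp Hq Hpq Hh).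
  - rewrite <- (filter_length (fun q => decide (dominated q)) l).
    pose proof length_undominated_le. pose proof length_dominated_lt. fold h. lia.
Qed.

End Tilt.

Lemma lin_nonzero_of_nvals a b P : (2 <= nvals (lin a b) P)%nat -> ~ (a = 0 /\ b = 0).
Proof.
  intros H [-> ->]. destruct (nvals_two_values _ _ H) as [p [q [_ [_ Hpq]]]].
  apply Hpq. unfold lin. ring.
Qed.

Lemma exists_injective_lin (P : list (R * R)) :
  exists t, ForallPairs (fun x y => lin 1 t x = lin 1 t y -> x = y) P.
Proof.
  set (slope := fun xy : (R * R) * (R * R) =>
          (fst (snd xy) - fst (fst xy)) / (snd (fst xy) - snd (snd xy))).
  set (M := MaxRlist (map slope (list_prod P P))).
  exists (M + 1). intros [x1 x2] [y1 y2] Hx Hy Hxy. unfold lin in Hxy; simpl in Hxy.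
  destruct (Req_dec x2 y2) as [<-|Hne]; [f_equal; lra | exfalso].
  assert (Hle : slope ((x1, x2), (y1, y2)) <= M)
    by (apply MaxRlist_P1, in_map, in_prod; auto).
  assert (E : slope ((x1, x2), (y1, y2)) = M + 1).
  { unfold slope; simpl. field_simplify_eq; [lra|]. intros H; apply Hne; lra. }
  lra.
Qed.

Lemma exists_collapsing_lin (P : list (R * R)) p q : In p P -> In q P -> p <> q ->
  exists a b, ~ (a = 0 /\ b = 0) /\ (nvals (lin a b) P < length P)%nat.
Proof.
  intros Hp Hq Hpq. exists (snd q - snd p), (fst p - fst q). split.
  - intros [E1 E2]. apply Hpq. destruct p, q; simpl in *. f_equal; lra.
  - apply (nvals_lt_length _ _ p q); auto. unfold lin. ring.
Qed.

Lemma lin_nvals_gap (P : list (R * R)) a1 b1 : NoDup P ->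
  (2 <= nvals (lin a1 b1) P)%nat ->
  (forall a b, ~ (a = 0 /\ b = 0) -> (nvals (lin a1 b1) P <= nvals (lin a b) P)%nat) ->
  exists a b, ~ (a = 0 /\ b = 0) /\
    (nvals (lin a b) P < length P < nvals (lin a b) P + nvals (lin a1 b1) P)%nat.
Proof.
  intros HP H2 Hmin.
  assert (Hlt : (nvals (lin a1 b1) P < length P)%nat).
  { destruct (nvals_two_values _ _ H2) as [p [q [Hp [Hq Hpq]]]].
    destruct (exists_collapsing_lin P p q Hp Hq) as [a [b [Hab Hc]]]; [congruence|].
    specialize (Hmin a b Hab). lia. }
  destruct (exists_injective_lin P) as [t Ht].
  destruct (nvals_tilt _ P (lin a1 b1) (lin 1 t) HP Ht H2) as [c Hc].
  rewrite (nvals_ext _ (lin (1 + c * a1) (t + c * b1))) in Hc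
    by (intros p; unfold lin; ring).
  exists (1 + c * a1), (t + c * b1). split; [apply (lin_nonzero_of_nvals _ _ P)|]; lia.
Qed.

Theorem proposition2p2 (A : nat -> Prop) (hA1 : ~ A 1%nat)
  (u v : nat -> R) (hu : bounded_seq u) (hv : bounded_seq v)
  (hind : lin_indep2 u v)
  (hM : forall a b : R, (exists n, lincomb a b u v n <> 0) ->
        exists k : nat, has_card (acc_pt (lincomb a b u v)) k /\ A k) :
  exists n1 n2 : nat,
    ((exists a b : R, (exists n, lincomb a b u v n <> 0) /\
        has_card (acc_pt (lincomb a b u v)) n1) /\
     (forall (a b : R) (k : nat), (exists n, lincomb a b u v n <> 0) ->
        has_card (acc_pt (lincomb a b u v)) k -> (n1 <= k)%nat)) /\
    ((exists a b : R, has_card (acc_pt (lincomb a b u v)) n2) /\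
     (forall (a b : R) (k : nat),
        has_card (acc_pt (lincomb a b u v)) k -> (k <= n2)%nat)) /\
    A n1 /\ A n2 /\
    (exists m : nat, A m /\ (n2 < m + n1)%nat /\ (m < n2)%nat).
Proof.
  pose proof (fun a b => lincomb_nonzero_iff u v a b hind) as nonzero.
  destruct (hM 1 0) as [ku [Hku _]]; [apply nonzero; lra|].
  destruct (hM 0 1) as [kv [Hkv _]]; [apply nonzero; lra|].
  destruct (joint_acc_pts_listing u v ku kv hu hv Hku Hkv) as [P [HP HJ]].
  assert (card : forall a b k,
             has_card (acc_pt (lincomb a b u v)) k <-> k = nvals (lin a b) P).
  { intros a b k. pose proof (has_card_acc_pt_lincomb u v P a b hu hv HJ) as Hc.
    split; [intros Hk; exact (has_card_unique _ _ _ Hk Hc) | intros ->; exact Hc]. }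
  assert (HA : forall a b, ~ (a = 0 /\ b = 0) ->
            A (nvals (lin a b) P) /\ (2 <= nvals (lin a b) P)%nat).
  { intros a b Hab. destruct (hM a b) as [k [Hk Ak]]; [apply nonzero, Hab|].
    apply card in Hk; subst k. split; [exact Ak|].
    destruct (joint_acc_pt_exists u v hu hv) as [p0 Hp0%HJ].
    pose proof (nvals_pos (lin a b) P p0 Hp0).
    assert (nvals (lin a b) P <> 1%nat) by (intros E; rewrite E in Ak; contradiction).
    lia. }
  destruct (exists_least_nat
              (fun k => exists a b, ~ (a = 0 /\ b = 0) /\ nvals (lin a b) P = k))
    as [n1 [[a1 [b1 [Hab1 <-]]] Hmin]].
  { exists (nvals (lin 1 0) P), 1, 0. split; [lra | reflexivity]. }
  destruct (lin_nvals_gap P a1 b1 HP (proj2 (HA a1 b1 Hab1))) as [a [b [Hab Hgap]]].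
  { intros a b Hab. apply Hmin. eauto. }
  destruct (exists_injective_lin P) as [t Ht].
  rewrite <- (nvals_injective (lin 1 t) P HP Ht) in Hgap.
  exists (nvals (lin a1 b1) P), (nvals (lin 1 t) P). repeat split.
  - exists a1, b1. split; [apply nonzero, Hab1 | apply card; reflexivity].
  - intros a' b' k Hnz Hk%card. subst k.
    apply Hmin. exists a', b'. split; [apply nonzero|]; auto.
  - exists 1, t. apply card; reflexivity.
  - intros a' b' k Hk%card. subst k.
    rewrite (nvals_injective (lin 1 t) P HP Ht). apply nvals_le_length.
  - apply HA, Hab1.
  - apply HA. lra.
  - exists (nvals (lin a b) P). split; [apply HA, Hab | lia].
Qed.
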